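(* Let $p,n$ be positive integers, $c=\gcd(p,n)$, $d=n/c$, $y\in\mathbb{Z}_n$, and let $\alpha_k$ ($0\le k\le c-1$) be defined by $\alpha_k(x_i)\equiv y+L(i-1)\,kd\pmod n$, $i=1,\dots,p+1$, where $L(m)$ is the least nonnegative residue of $m$ modulo $p$. Then $\hom(P(\widetilde{\mathcal{T}(p,2)}),(\mathbb{Z}_n,y,y))=\{\alpha_0,\dots,\alpha_{c-1}\}$, these $c$ homomorphisms are pairwise distinct, and hence the pointed quandle counting invariant is $\Phi^{\mathbb{Z}}_{(\mathbb{Z}_n,y,y)}(\widetilde{\mathcal{T}(p,2)})=|\hom(P(\widetilde{\mathcal{T}(p,2)}),(\mathbb{Z}_n,y,y))|=c$.
   Context: $\mathbb{Z}_n$ is the dihedral quandle ($x\triangleright y=2y-x$ mod $n$); $(\mathbb{Z}_n,y,y)$ is the $2$-pointed quandle with both basepoints $y$. $P(\widetilde{\mathcal{T}(p,2)})=(Q,x_1,x_{p+1})$ with $Q=\langle x_1,\dots,x_{p+1}\mid x_p=x_2\triangleright x_{p+1},\ x_i=x_{i+2}\triangleright x_{i+1}\ (1\le i\le p-1)\rangle$, the fundamental pointed quandle of the $1$-linkoid of $(p,2)$-torus type; $\hom$ denotes basepoint-preserving quandle homomorphisms. *)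

From mathcomp Require Import all_boot.
Set Implicit Arguments. Unset Strict Implicit. Unset Printing Implicit Defensive.

(* Dihedral quandle Z_n, elements represented by residues 0..n-1 (type 'I_n).
   a |> b := 2 b - a (mod n), computed on residues. *)
Definition dih (n a b : nat) : nat := (2 * b + (n - a %% n)) %% n.

(* Basepoint-preserving quandle homomorphisms
     P(T~(p,2)) = (Q, x_1, x_{p+1})  -->  (Z_n, y, y),
   where Q = < x_1,...,x_{p+1} | x_p = x_2 |> x_{p+1},
                                 x_i = x_{i+2} |> x_{i+1} (1 <= i <= p-1) >.
   By the universal property of a quandle presentation, such a homomorphism is
   exactly an assignment of the generators (x_i is indexed by i-1 : 'I_p.+1)
   into Z_n satisfying the relations, with x_1 |-> y and x_{p+1} |-> y. *)
Definition torus_pointed_hom (p n y : nat) (f : {ffun 'I_p.+1 -> 'I_n}) : bool :=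
  let g (j : nat) := nat_of_ord (f (inord j)) in
  [&& g 0 == y, g p == y,
      g p.-1 == dih n (g 1) (g p)
    & [forall j : 'I_p.-1, g j == dih n (g j.+2) (g j.+1)]].

Definition alpha_val (p n y k d j : nat) : nat := (y + (j %% p) * k * d) %% n.
Arguments torus_pointed_hom : clear implicits.

From mathcomp Require Import all_boot.
From mathcomp Require Import zify.

Set Implicit Arguments.
Unset Strict Implicit.
Unset Printing Implicit Defensive.

(* In the dihedral quandle the relation x_i = x_(i+2) |> x_(i+1) reads
   g_i + g_(i+2) = 2 g_(i+1) (mod n), so a colouring with x_1 |-> y is an
   arithmetic progression y + (i-1) t (mod n).  The basepoint x_(p+1) |-> y
   forces p t = 0 (mod n), i.e. t = k d with d = n / gcd(p, n) and
   k < gcd(p, n); conversely, the remaining relation x_p = x_2 |> x_(p+1)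
   holds for such a progression precisely because p t = 0 (mod n). *)

Lemma dvdn_mul_divgcd m n t : 0 < n -> (n %| m * t) = (n %/ gcdn m n %| t).
Proof.
move=> n_gt0; apply/idP/idP => [n_dvd_mt | /dvdnP[k ->]].
- have : n %| gcdn m n * t by rewrite muln_gcdl dvdn_gcd n_dvd_mt dvdn_mulr.
  rewrite -{1}(divnK (dvdn_gcdr m n)) [_ * t]mulnC dvdn_pmul2r //.
  by rewrite gcdn_gt0 n_gt0 orbT.
- by rewrite mulnCA muln_divCA_gcd mulnCA dvdn_mulr.
Qed.

Section DihedralQuandle.

Variables (n : nat) (n_gt0 : 0 < n).

Lemma eq_dih_mod x a b : x < n -> (x == dih n a b) = (x + a == 2 * b %[mod n]).
Proof.
move=> x_lt_n.
have dih_a : dih n a b + a = 2 * b %[mod n].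
  rewrite -modnDmr /dih modnDml -addnA subnK ?modnDr //.
  by rewrite ltnW ?ltn_pmod.
have -> : (x == dih n a b) = (x == dih n a b %[mod n]).
  by rewrite !modn_small ?ltn_pmod.
by rewrite -(eqn_modDr a) dih_a.
Qed.

Lemma progression_dih a t i j l : (i + j) * t = (2 * l) * t %[mod n] ->
  (a + i * t) %% n == dih n ((a + j * t) %% n) ((a + l * t) %% n).
Proof.
move=> ijl.
rewrite eq_dih_mod ?ltn_pmod // modnDm modnMmr.
have -> : a + i * t + (a + j * t) = 2 * a + (i + j) * t by rewrite mulnDl; lia.
by rewrite -modnDmr ijl modnDmr mulnDr mulnA.
Qed.

Lemma dih_recurrence_progression (g : nat -> nat) a t m :
  (forall j, j <= m -> g j < n) -> g 0 = a %% n -> g 1 = (a + t) %% n ->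
  (forall j, j.+2 <= m -> g j == dih n (g j.+2) (g j.+1)) ->
  forall j, j <= m -> g j = (a + j * t) %% n.
Proof.
move=> g_lt_n g0 g1 g_rec.
suff g_pair j : j < m -> g j = (a + j * t) %% n /\ g j.+1 = (a + j.+1 * t) %% n.
  by case=> [_ | j /g_pair[]]; rewrite ?mul0n ?addn0.
elim: j => [|j IHj] j_lt_m; first by rewrite mul0n addn0 mul1n.
have [gj gj1] := IHj (ltnW j_lt_m); split=> //.
have := g_rec j j_lt_m; rewrite eq_dih_mod ?g_lt_n ?(ltnW (ltnW j_lt_m)) // => /eqP gj2.
rewrite -(modn_small (g_lt_n _ j_lt_m)); apply/eqP.
rewrite -(eqn_modDl (a + j * t)) -modnDml -gj gj2 gj1 modnMmr.
by apply/eqP; congr (_ %% _); rewrite !mulSn; lia.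
Qed.

End DihedralQuandle.

Section TorusLinkoid.

Variables (p n : nat) (y : 'I_n).
Hypotheses (p_gt0 : 0 < p) (n_gt0 : 0 < n).

Local Notation c := (gcdn p n).
Local Notation d := (n %/ gcdn p n).

Lemma torus_pointed_hom_progression (f : {ffun 'I_p.+1 -> 'I_n}) :
  torus_pointed_hom p n y f ->
  exists2 t, t < n /\ n %| p * t & forall j : 'I_p.+1, f j = (y + j * t) %% n :> nat.
Proof.
case/and4P=> /eqP g0 /eqP gp _ /forallP g_rec.
set g := fun j => nat_of_ord (f (inord j)).
set t := (g 1 + (n - y)) %% n.
have g_prog : forall j, j <= p -> g j = (y + j * t) %% n.
  apply: (@dih_recurrence_progression n n_gt0 g y t p) => [j _ | | | j j_lt_p].
  - exact: ltn_ord.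
  - by rewrite /g g0 modn_small.
  - rewrite /t modnDmr addnCA subnKC ?modnDr ?modn_small //; last exact: ltnW.
    exact: ltn_ord.
  - have j_lt : j < p.-1 by rewrite -ltnS prednK.
    exact: (g_rec (Ordinal j_lt)).
exists t; first split; first exact: ltn_pmod.
- apply/eqP; rewrite -(mod0n n); apply/eqP.
  by rewrite -(eqn_modDl y) addn0 -g_prog // /g gp modn_small.
- by move=> j; rewrite -g_prog ?leq_ord // /g inord_val.
Qed.

Lemma progression_torus_pointed_hom (f : {ffun 'I_p.+1 -> 'I_n}) t :
  n %| p * t -> (forall j : 'I_p.+1, f j = (y + j * t) %% n :> nat) ->
  torus_pointed_hom p n y f.
Proof.
move=> /eqP pt0 f_prog.
have g_prog j : j <= p -> f (inord j) = (y + j * t) %% n :> nat.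
  by move=> j_le_p; rewrite f_prog inordK.
apply/and4P; split.
- by rewrite g_prog // mul0n addn0 modn_small.
- by rewrite g_prog // -modnDmr pt0 addn0 modn_small.
- rewrite !g_prog ?leq_pred //; apply: (progression_dih n_gt0).
  by rewrite addn1 prednK // -mulnA -[in RHS]modnMmr pt0 muln0 mod0n.
- apply/forallP=> j; have := ltn_ord j => j_lt.
  rewrite !g_prog; try lia.
  by apply: (progression_dih n_gt0); rewrite -addSnnS addnn -mul2n.
Qed.

Let divgcdK : d * c = n. Proof. exact: divnK (dvdn_gcdr p n). Qed.

Let divgcd_gt0 : 0 < d.
Proof. by rewrite divn_gt0 ?gcdn_gt0 ?n_gt0 ?orbT // dvdn_leq ?dvdn_gcdr. Qed.

Lemma ltn_mul_divgcd k : (k * d < n) = (k < c).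
Proof. by rewrite -[X in _ < X]divgcdK [k * d]mulnC ltn_pmul2l. Qed.

Lemma alpha_val_ltn k j : alpha_val p n y k d j < n.
Proof. exact: ltn_pmod. Qed.

Lemma alpha_valE k j : alpha_val p n y k d j = (y + j * (k * d)) %% n.
Proof.
have /eqP pkd0 : n %| p * (k * d) by rewrite dvdn_mul_divgcd // dvdn_mull.
have -> : j * (k * d) = j %% p * (k * d) + j %/ p * (p * (k * d)).
  by rewrite {1}(divn_eq j p) mulnDl addnC -mulnA.
by rewrite /alpha_val -mulnA addnA -[RHS]modnDmr -modnMmr pkd0 muln0 mod0n addn0.
Qed.

Lemma torus_pointed_hom_alpha (f : {ffun 'I_p.+1 -> 'I_n}) :
  torus_pointed_hom p n y f <->
  exists2 k, k < c & forall j : 'I_p.+1, f j = alpha_val p n y k d j :> nat.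
Proof.
split=> [/torus_pointed_hom_progression[t []] | [k k_lt_c f_alpha]].
- rewrite dvdn_mul_divgcd // => t_lt_n /dvdnP[k t_kd] f_prog.
  exists k => [|j]; first by rewrite -ltn_mul_divgcd -t_kd.
  by rewrite alpha_valE -t_kd.
- apply: (@progression_torus_pointed_hom _ (k * d)).
    by rewrite dvdn_mul_divgcd // dvdn_mull.
  by move=> j; rewrite f_alpha alpha_valE.
Qed.

Lemma alpha_val_inj k1 k2 : k1 < c -> k2 < c ->
  (forall j : 'I_p.+1, alpha_val p n y k1 d j = alpha_val p n y k2 d j) ->
  k1 = k2.
Proof.
move=> k1_lt_c k2_lt_c /(_ (inord 1)).
rewrite !alpha_valE inordK ?ltnS // !mul1n => /eqP.
by rewrite eqn_modDl !modn_small ?ltn_mul_divgcd // eqn_pmul2r // => /eqP.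
Qed.

Lemma card_torus_pointed_hom :
  #|[set f : {ffun 'I_p.+1 -> 'I_n} | torus_pointed_hom p n y f]| = c.
Proof.
pose alpha (k : 'I_c) := [ffun j : 'I_p.+1 => Ordinal (alpha_val_ltn k j)].
have alpha_inj : injective alpha.
  move=> k1 k2 /ffunP alpha12.
  apply/val_inj/alpha_val_inj => [||j]; rewrite ?ltn_ord //.
  by have /(congr1 val) := alpha12 j; rewrite !ffunE.
suff -> : [set f | torus_pointed_hom p n y f] = alpha @: setT.
  by rewrite card_imset // cardsT card_ord.
apply/setP=> f; rewrite inE; apply/idP/imsetP.
- case/torus_pointed_hom_alpha=> k k_lt_c f_alpha; exists (Ordinal k_lt_c) => //.
  by apply/ffunP=> j; apply: val_inj; rewrite ffunE /= f_alpha.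
- by case=> k _ ->; apply/torus_pointed_hom_alpha; exists k => // j; rewrite ffunE.
Qed.

End TorusLinkoid.

Theorem theorem6p6 (p n : nat) (y : 'I_n) :
  0 < p -> 0 < n ->
  let c := gcdn p n in
  let d := n %/ c in
  (* hom(P(T~(p,2)), (Z_n,y,y)) = {alpha_0, ..., alpha_{c-1}} *)
  (forall f : {ffun 'I_p.+1 -> 'I_n},
     torus_pointed_hom p n y f <->
     exists2 k, k < c & forall j : 'I_p.+1, nat_of_ord (f j) = alpha_val p n y k d j)
  (* the alpha_k are pairwise distinct *)
  /\ (forall k1 k2, k1 < c -> k2 < c ->
        (forall j : 'I_p.+1, alpha_val p n y k1 d j = alpha_val p n y k2 d j) ->
        k1 = k2)
  (* counting invariant *)
  /\ #|[set f : {ffun 'I_p.+1 -> 'I_n} | torus_pointed_hom p n y f]| = c.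
Proof.
move=> p_gt0 n_gt0 c d; split; [|split].
- exact: torus_pointed_hom_alpha.
- exact: alpha_val_inj.
- exact: card_torus_pointed_hom.
Qed.
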